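(* (1) For $3\le p<\omega$, $3\le n<\omega$ and $0\le m\le n$, $L_6(p,p)$ is isomorphic to a subalgebra of $L_6(m,n)$ if and only if $p=m=n$. (2) The lattice of subvarieties of $\mathbf{M}_1$ has cardinality $2^\omega$.
   Context: For a finite set $S$ with $|S|\ge3$ and $I\subseteq S$, $Q_6(I,S)$ is the finite $pm$-space on $S\cup\zeta(S)$, where $\zeta(S)$ is a disjoint copy of $S$, $\zeta$ interchanges each $s\in S$ with its copy, the topology is discrete, and the only strict comparabilities are: for $x,y\in S$, $x<\zeta(y)$ iff ($x\ne y$ or $x\notin I$). $Q_6(m,n)$ denotes $Q_6(I,S)$ with $|S|=n$, $|I|=m$, and $L_6(m,n)$ its dual pseudocomplemented de Morgan algebra (decreasing subsets $X$ with $\cap,\cup$, $X^\ast=$ complement of $[X)$, $X'=$ complement of $\zeta(X)$). $\mathbf{M}_1$ is the variety of pseudocomplemented de Morgan algebras $(L;\wedge,\vee,{}^\ast,{}^\prime,0,1)$ satisfying $x\wedge x^{\prime\ast\prime}\le y\vee y^\ast$ and $(x\wedge x^{\prime\ast})^{\prime\ast}=(x\wedge x^{\prime\ast})^{\prime\ast\prime\ast}$. *)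

From HB Require Import structures.
From mathcomp Require Import all_boot.
Set Implicit Arguments. Unset Strict Implicit. Unset Printing Implicit Defensive.

Record pmAlg := PmAlg {
  pcar :> Type;
  pmeet : pcar -> pcar -> pcar;
  pjoin : pcar -> pcar -> pcar;
  pstar : pcar -> pcar;      (* pseudocomplement  x^*  *)
  pprime : pcar -> pcar;     (* de Morgan negation x'  *)
  pzero : pcar;
  pone : pcar }.
Arguments pmeet : clear implicits.
Arguments pjoin : clear implicits.
Arguments pstar : clear implicits.
Arguments pprime : clear implicits.
Arguments pzero : clear implicits.
Arguments pone : clear implicits.

Definition is_pma (A : pmAlg) : Prop :=
  let m := pmeet A in let j := pjoin A in
  (forall x y z : A, m x (m y z) = m (m x y) z /\ j x (j y z) = j (j x y) z) /\
      (forall x y : A, m x y = m y x /\ j x y = j y x) /\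
      (forall x y : A, m x (j x y) = x /\ j x (m x y) = x) /\
      (forall x y z : A, m x (j y z) = j (m x y) (m x z)) /\
      (forall x : A, j x (pzero A) = x /\ m x (pone A) = x) /\
      (forall x y : A, pprime A (pprime A x) = x /\
                       pprime A (m x y) = j (pprime A x) (pprime A y) /\
                       pprime A (j x y) = m (pprime A x) (pprime A y)) /\
      (forall x y : A, m x y = pzero A <-> m y (pstar A x) = y).

Inductive term : Type :=
  | tVar of nat
  | tMeet of term & term
  | tJoin of term & term
  | tStar of term
  | tPrime of term
  | tZero
  | tOne.

Fixpoint teval (A : pmAlg) (v : nat -> A) (t : term) : A :=
  match t with
  | tVar i => v i
  | tMeet s u => pmeet A (teval v s) (teval v u)
  | tJoin s u => pjoin A (teval v s) (teval v u)
  | tStar s => pstar A (teval v s)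
  | tPrime s => pprime A (teval v s)
  | tZero => pzero A
  | tOne => pone A
  end.

Definition holds (A : pmAlg) (e : term * term) : Prop :=
  forall v : nat -> A, teval v e.1 = teval v e.2.

(* The two defining identities of M_1, with x = tVar 0, y = tVar 1,
   writing st(.) for the pseudocomplement and pr(.) for the de Morgan negation:
   [id1]  x meet pr(st(pr x))  <=  y join st y
          (written as  a meet (y join st y) = a  with a = x meet pr(st(pr x)))
   [id2]  st(pr u) = st(pr(st(pr u)))  with u = x meet st(pr x)  *)
Definition M1_id1 : term * term :=
  let x := tVar 0 in let y := tVar 1 in
  let a := tMeet x (tPrime (tStar (tPrime x))) in
  (tMeet a (tJoin y (tStar y)), a).

Definition M1_id2 : term * term :=
  let x := tVar 0 in
  let u := tMeet x (tStar (tPrime x)) in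
  (tStar (tPrime u), tStar (tPrime (tStar (tPrime u)))).

Definition inM1 (A : pmAlg) : Prop := is_pma A /\ holds A M1_id1 /\ holds A M1_id2.

Definition is_subvariety_M1 (K : pmAlg -> Prop) : Prop :=
  exists Sigma : term * term -> Prop,
    forall A : pmAlg, K A <-> (inM1 A /\ forall e, Sigma e -> holds A e).

(* Embeddings (= isomorphisms onto a subalgebra). *)
Definition pm_hom (A B : pmAlg) (f : A -> B) : Prop :=
  (forall x y, f (pmeet A x y) = pmeet B (f x) (f y)) /\
  (forall x y, f (pjoin A x y) = pjoin B (f x) (f y)) /\
  (forall x, f (pstar A x) = pstar B (f x)) /\
  (forall x, f (pprime A x) = pprime B (f x)) /\
  f (pzero A) = pzero B /\ f (pone A) = pone B.

Definition pm_embeds (A B : pmAlg) : Prop :=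
  exists f : A -> B, injective f /\ pm_hom f.

(* The pm-space Q_6(m,n) = Q_6(I,S) with S = 'I_n, I = {i | i < m},    *)
(* zeta(S) a disjoint copy of S (points inl s and inr s = zeta s).     *)
Definition Q6pt (n : nat) := ('I_n + 'I_n)%type.

Definition zeta n (x : Q6pt n) : Q6pt n :=
  match x with inl a => inr a | inr a => inl a end.

Definition q6lt (m n : nat) (x y : Q6pt n) : bool :=
  match x, y with
  | inl a, inr b => (a != b) || (m <= a)
  | _, _ => false
  end.

Definition q6le m n (x y : Q6pt n) : bool := (x == y) || q6lt m x y.

Definition q6down m n (X : {set Q6pt n}) : bool :=
  [forall y, forall x, (y \in X) && q6le m x y ==> (x \in X)].

Definition q6up m n (X : {set Q6pt n}) : {set Q6pt n} :=
  [set y | [exists x in X, q6le m x y]].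

Lemma q6downP m n (X : {set Q6pt n}) :
  reflect (forall x y, y \in X -> q6le m x y -> x \in X) (q6down m X).
Proof.
apply: (iffP forallP) => [H x y Hy Hxy | H y].
  by move/forallP: (H y) => /(_ x); rewrite Hy Hxy.
by apply/forallP => x; apply/implyP => /andP[]; exact: H.
Qed.

Lemma q6le_trans m n (x y z : Q6pt n) : q6le m x y -> q6le m y z -> q6le m x z.
Proof.
move=> /orP[/eqP->|Hxy] // /orP[/eqP<-|Hyz]; first by rewrite /q6le Hxy orbT.
by move: x y z Hxy Hyz => [?|?] [?|?] [?|?].
Qed.

Lemma q6le_zeta m n (x y : Q6pt n) : q6le m x y -> q6le m (zeta y) (zeta x).
Proof.
move=> /orP[/eqP->|]; first by rewrite /q6le eqxx.
case: x => a; case: y => b //= H; apply/orP; right => /=.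
by case: (eqVneq a b) H => [->|/negPf Hab] //=; rewrite eq_sym Hab.
Qed.

Definition L6car (m n : nat) := {X : {set Q6pt n} | q6down m X}.

Lemma q6down0 m n : q6down m (set0 : {set Q6pt n}).
Proof. by apply/q6downP => x y; rewrite inE. Qed.

Lemma q6downT m n : q6down m (setT : {set Q6pt n}).
Proof. by apply/q6downP => x y; rewrite !inE. Qed.

Lemma q6downI m n (X Y : {set Q6pt n}) : q6down m X -> q6down m Y -> q6down m (X :&: Y).
Proof.
move=> /q6downP HX /q6downP HY; apply/q6downP => x y; rewrite !inE => /andP[hx hy] le.
by rewrite (HX x y) // (HY x y).
Qed.

Lemma q6downU m n (X Y : {set Q6pt n}) : q6down m X -> q6down m Y -> q6down m (X :|: Y).
Proof.
move=> /q6downP HX /q6downP HY; apply/q6downP => x y; rewrite !inE => /orP[hx|hy] le.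
  by rewrite (HX x y).
by rewrite (HY x y) ?orbT.
Qed.

Definition q6star m n (X : {set Q6pt n}) : {set Q6pt n} := ~: q6up m X.

(* X' = complement of zeta(X) (zeta is an involution, so
   x \in zeta(X) iff zeta x \in X) *)
Definition q6prime n (X : {set Q6pt n}) : {set Q6pt n} := ~: [set x | zeta x \in X].

Lemma q6downS m n (X : {set Q6pt n}) : q6down m (q6star m X).
Proof.
apply/q6downP => x y; rewrite !inE => /negP Hy le; apply/negP => /existsP[z /andP[hz hzx]].
by apply: Hy; apply/existsP; exists z; rewrite hz (q6le_trans hzx le).
Qed.

Lemma q6downP' m n (X : {set Q6pt n}) : q6down m X -> q6down m (q6prime X).
Proof.
move=> /q6downP HX; apply/q6downP => x y; rewrite !inE => /negP Hy le; apply/negP => hx.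
by apply: Hy; apply: (HX _ (zeta x)) => //; exact: q6le_zeta.
Qed.

Definition L6meet m n (X Y : L6car m n) : L6car m n :=
  exist _ (sval X :&: sval Y) (q6downI (svalP X) (svalP Y)).
Definition L6join m n (X Y : L6car m n) : L6car m n :=
  exist _ (sval X :|: sval Y) (q6downU (svalP X) (svalP Y)).
Definition L6star m n (X : L6car m n) : L6car m n :=
  exist _ (q6star m (sval X)) (q6downS m (sval X)).
Definition L6prime m n (X : L6car m n) : L6car m n :=
  exist _ (q6prime (sval X)) (q6downP' (svalP X)).
Definition L6zero m n : L6car m n := exist _ set0 (q6down0 m n).
Definition L6one m n : L6car m n := exist _ setT (q6downT m n).

(* L_6(m,n): the dual pm-algebra of Q_6(m,n) (decreasing subsets). *)
Definition L6 (m n : nat) : pmAlg :=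
  @PmAlg (L6car m n) (@L6meet m n) (@L6join m n) (@L6star m n)
         (@L6prime m n) (L6zero m n) (L6one m n).

(* Write d x = x'*'*. In L_6(m,n) with n >= 3, d (d x) is 1 if x = 1 and 0
   otherwise, so d (d x') tests x = 0 and terms can express Boolean
   conditions. The points {s} with s in I are definable: they are the x with
   x <> 0, x'* = 0 and x*'* <> 0. Hence "x_0, ..., x_(k-1) are pairwise disjoint
   such atoms whose join has pseudocomplement 0" is a {0,1}-valued term
   tFrame k. In L_6(m,n) it can only take the value 1 if k = n and every point
   of S lies in I, while in L_6(n,n) the atoms realise it for k = n.
   (1) A homomorphism L_6(p,p) -> L_6(m,n) sends the value 1 of tFrame p at the
   atoms of L_6(p,p) to 1, so p = n <= m.
   (2) L_6(n,n) satisfies tFrame k = 0 iff k <> n, so the subvarieties of M_1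
   axiomatised by these identities separate all subsets of {3, 4, ...}; and
   a subvariety is determined by its equational theory, a subset of a
   countable set. *)

From HB Require Import structures.
From mathcomp Require Import all_boot zify.
From Stdlib Require Import ClassicalEpsilon.
Set Implicit Arguments. Unset Strict Implicit. Unset Printing Implicit Defensive.

Lemma q6le_inl m n (x : Q6pt n) s : q6le m x (inl s) = (x == inl s).
Proof. by case: x => a; rewrite /q6le /= ?orbF. Qed.

Lemma q6le_inr m n (x : Q6pt n) u :
  q6le m x (inr u) = if x is inl t then (t != u) || (m <= t) else x == inr u.
Proof. by case: x => a; rewrite /q6le /= ?orbF. Qed.

Section L6Basics.
Variables m n : nat.
Implicit Types (X Y : L6car m n) (s t u : 'I_n) (z : Q6pt n).
Local Notation L0 := (L6zero m n).
Local Notation L1 := (L6one m n).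

Lemma in_L6meet X Y z : (z \in sval (L6meet X Y)) = (z \in sval X) && (z \in sval Y).
Proof. exact: in_setI. Qed.

Lemma in_L6join X Y z : (z \in sval (L6join X Y)) = (z \in sval X) || (z \in sval Y).
Proof. exact: in_setU. Qed.

Lemma in_L6prime X z : (z \in sval (L6prime X)) = (zeta z \notin sval X).
Proof. by rewrite !inE. Qed.

Lemma inl_L6prime X s : (inl s \in sval (L6prime X)) = (inr s \notin sval X).
Proof. exact: in_L6prime. Qed.

Lemma inr_L6prime X s : (inr s \in sval (L6prime X)) = (inl s \notin sval X).
Proof. exact: in_L6prime. Qed.

Lemma in_L6zero z : (z \in sval L0) = false.
Proof. exact: in_set0. Qed.

Lemma in_L6one z : (z \in sval L1).
Proof. exact: in_setT. Qed.

Lemma inl_L6star X s : (inl s \in sval (L6star X)) = (inl s \notin sval X).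
Proof.
rewrite /= /q6star /q6up !inE; congr negb; apply/existsP/idP => [[x /andP[Xx]]|Xs].
  by rewrite q6le_inl => /eqP <-.
by exists (inl s); rewrite Xs q6le_inl eqxx.
Qed.

Lemma inr_L6star X u : (inr u \in sval (L6star X)) =
  (inr u \notin sval X) && [forall t, (inl t \in sval X) ==> (t == u) && (t < m)].
Proof.
rewrite /= /q6star /q6up !inE negb_exists; apply/forallP/andP => [up_u|[Xu /forallP Xl] [t|w]].
- split; first by have := up_u (inr u); rewrite q6le_inr eqxx andbT.
  apply/forallP => t; have := up_u (inl t).
  by rewrite q6le_inr negb_and negb_or -ltnNge negbK; case: (_ \in _).
- have := Xl t; rewrite q6le_inr; case: (inl t \in _) => //= /andP[/eqP-> ].
  by rewrite eqxx -ltnNge.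
- by rewrite q6le_inr; case: eqP => [[->]|]; rewrite ?andbT ?andbF.
Qed.

Lemma L6_down X s t : inr t \in sval X -> s != t -> inl s \in sval X.
Proof. by move=> Xt st; apply: (q6downP _ _ (svalP X) _ (inr t)); rewrite // q6le_inr /= st. Qed.

Lemma L6prime0 : L6prime L0 = L1.
Proof. by apply/val_inj/setP => z; rewrite in_L6prime in_L6zero in_L6one. Qed.

Lemma L6prime1 : L6prime L1 = L0.
Proof. by apply/val_inj/setP => z; rewrite in_L6prime in_L6zero in_L6one. Qed.

Lemma L6primeK X : L6prime (L6prime X) = X.
Proof. by apply/val_inj/setP => z; rewrite !in_L6prime negbK; case: z. Qed.

Lemma L6meetxx X : L6meet X X = X.
Proof. by apply/val_inj/setP => z; rewrite in_L6meet andbb. Qed.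

Lemma L6meet1l X : L6meet L1 X = X.
Proof. by apply/val_inj/setP => z; rewrite in_L6meet in_L6one. Qed.

Lemma L6star0 : L6star L0 = L1.
Proof.
apply/val_inj/setP => -[s|u]; rewrite ?inl_L6star ?inr_L6star !in_L6zero in_L6one //.
by apply/forallP => s; rewrite in_L6zero.
Qed.

Lemma L6star1 : L6star L1 = L0.
Proof. by apply/val_inj/setP => -[s|u]; rewrite ?inl_L6star ?inr_L6star !in_L6zero in_L6one. Qed.

Lemma L6zero_neq_one : 0 < n -> L0 != L1.
Proof.
move=> n_gt0; apply/eqP => /(congr1 (fun X => inl (Ordinal n_gt0) \in sval X)).
by rewrite in_L6zero in_L6one.
Qed.

End L6Basics.

Lemma exists_neq_ord n (u : 'I_n) : 1 < n -> exists s, s != u.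
Proof.
move=> n_gt1; have : 0 < #|~: [set u]| by rewrite cardsC1 card_ord; lia.
by case/card_gt0P => s; rewrite !inE; exists s.
Qed.

Lemma ord_neq_const n (r u : 'I_n) : (forall s, s != r -> s = u) -> n <= 2.
Proof.
move=> const; have : ~: [set r] \subset [set u].
  by apply/subsetP => s; rewrite !inE => /const ->.
by move/subset_leq_card; rewrite cardsC1 cards1 card_ord; lia.
Qed.

Lemma size_uniq_ord n (ss : seq 'I_n) : uniq ss -> (forall s, s \in ss) -> size ss = n.
Proof.
move=> ss_uniq ss_all; rewrite -[RHS](size_enum_ord n); apply/perm_size/uniq_perm => //.
  exact: enum_uniq.
by move=> s; rewrite ss_all mem_enum.
Qed.

Section L6Density.
Variables m n : nat.
Hypothesis n_gt1 : 1 < n.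
Implicit Types (X Y : L6car m n).
Local Notation L0 := (L6zero m n).
Local Notation L1 := (L6one m n).

Lemma L6_eq1 X : (forall u, inr u \in sval X) -> X = L1.
Proof.
move=> Xr; apply/val_inj/setP => -[s|u]; rewrite in_L6one ?Xr //.
by have [t ts] := exists_neq_ord s n_gt1; apply: (L6_down (Xr t)); rewrite eq_sym.
Qed.

Lemma L6star_eq0 X : (L6star X == L0) = [forall s, inl s \in sval X].
Proof.
apply/eqP/forallP => [X0 s|Xl].
  by have := congr1 (fun Y => inl s \in sval Y) X0; rewrite inl_L6star in_L6zero => /negbFE.
apply/val_inj/setP => -[s|u]; rewrite in_L6zero ?inl_L6star ?Xl //.
have [t tu] := exists_neq_ord u n_gt1.
rewrite inr_L6star; apply/negbTE/nandP; right.
by apply/forallPn; exists t; rewrite Xl (negPf tu).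
Qed.

End L6Density.

Lemma L6_pma m n : is_pma (L6 m n).
Proof.
split; last split; last split; last split; last split; last split.
1-6: by do ?[move=> ?|split]; apply/val_inj/setP => -[?|?];
  rewrite /= !inE ?negbK; do ?case: (_ \in _).
move=> X Y; split => [XY0|<-].
  apply/val_inj/setP => z; rewrite in_L6meet /= !inE.
  case Yz: (z \in sval Y); rewrite ?andbT ?andbF //.
  apply/negP => /existsP[w /andP[Xw wz]].
  have Yw := q6downP _ _ (svalP Y) _ _ Yz wz.
  by have := congr1 (fun V : L6car m n => w \in sval V) XY0; rewrite in_L6meet in_L6zero Xw Yw.
apply/val_inj/setP => z; rewrite !in_L6meet in_L6zero /= !inE.
by apply/negbTE/andP => -[Xz /andP[_ /existsP]]; apply; exists z; rewrite Xz /q6le eqxx.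
Qed.

Lemma L6_id1 m n : holds (L6 m n) M1_id1.
Proof.
move=> v /=; set x := v 0; set y := v 1.
apply/val_inj/setP => -[s|u]; rewrite !in_L6meet in_L6join.
  by rewrite inl_L6star; case: (inl s \in sval y); rewrite ?andbT.
by rewrite inr_L6prime inl_L6star inl_L6prime negbK; case: (inr u \in sval x).
Qed.

Lemma L6_id2 m n : 1 < n -> holds (L6 m n) M1_id2.
Proof.
move=> n_gt1 v /=; set x := v 0.
have [/forallP xr|/forallPn[r xr]] := boolP [forall r, inr r \in sval x].
  by rewrite (L6_eq1 n_gt1 xr) !(L6prime1, L6star0, L6meet1l).
set u := L6meet x (L6star (L6prime x)).
suff -> : L6star (L6prime u) = L6zero m n by rewrite L6prime0 L6star1.
apply/eqP; rewrite L6star_eq0 //; apply/forallP => s.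
rewrite inl_L6prime in_L6meet inr_L6star inr_L6prime; apply/negP => /and3P[xs _ /forallP/(_ r)].
by rewrite inl_L6prime xr => /andP[/eqP rs _]; rewrite rs xs in xr.
Qed.

Lemma L6_inM1 m n : 1 < n -> inM1 (L6 m n).
Proof. by move=> n_gt1; split; [exact: L6_pma | split; [exact: L6_id1 | exact: L6_id2]]. Qed.

Definition L6bool m n (b : bool) : L6car m n := if b then L6one m n else L6zero m n.

Definition L6d m n (X : L6car m n) : L6car m n := L6star (L6prime (L6star (L6prime X))).

Section L6Tests.
Variables m n : nat.
Implicit Types (X : L6car m n) (b : bool).
Local Notation L0 := (L6zero m n).
Local Notation L1 := (L6one m n).

Lemma L6meet_bool b c : L6meet (L6bool m n b) (L6bool m n c) = L6bool m n (b && c).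
Proof. by case: b; rewrite ?L6meet1l //; apply/val_inj/setP => z; rewrite in_L6meet in_L6zero. Qed.

Lemma L6star_bool b : L6star (L6bool m n b) = L6bool m n (~~ b).
Proof. by case: b; rewrite ?L6star0 ?L6star1. Qed.

Lemma L6bool_eq1 b : 0 < n -> (L6bool m n b == L1) = b.
Proof. by case: b => [|/(L6zero_neq_one m)/negPf]; rewrite ?eqxx. Qed.

Hypothesis n_gt2 : 2 < n.

Lemma L6d_notin_inr X r : inr r \notin sval X ->
  (forall u, inr u \notin sval (L6d X)) /\ (forall s, inl s \in sval (L6d X) -> s = r).
Proof.
move=> Xr; split => [u|s].
  rewrite inr_L6star inr_L6prime; apply/negP => /andP[_ /forallP Wu].
  suff : n <= 2 by lia.
  apply: (@ord_neq_const _ r u) => t tr; apply/eqP.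
  have /implyP/(_ _)/andP[] // := Wu t.
  rewrite inl_L6prime inr_L6star inr_L6prime negbK negb_and; apply/orP; right.
  by apply/forallPn; exists r; rewrite inl_L6prime Xr eq_sym (negPf tr).
rewrite inl_L6star inl_L6prime negbK inr_L6star => /andP[_ /forallP/(_ r)].
by rewrite inl_L6prime Xr => /andP[/eqP].
Qed.

Lemma L6ddE X : L6d (L6d X) = L6bool m n (X == L1).
Proof.
have [->|X1] := eqVneq X L1; first by rewrite /L6d !(L6prime1, L6star0).
have [r Xr] : exists r, inr r \notin sval X.
  apply/existsP; apply: contraNT X1 => /existsPn Xr.
  by rewrite (L6_eq1 _ (fun r => negbNE (Xr r))) //; lia.
have [dX_r _] := L6d_notin_inr Xr.
apply/val_inj/setP => -[s|u]; rewrite in_L6zero; apply/negbTE.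
  have [t ts] := exists_neq_ord s (ltnW n_gt2).
  by apply/negP => /((L6d_notin_inr (dX_r t)).2) st; rewrite st eqxx in ts.
exact: (L6d_notin_inr (dX_r u)).1.
Qed.

Lemma L6dd_primeE X : L6d (L6d (L6prime X)) = L6bool m n (X == L0).
Proof. by rewrite L6ddE -{1}L6prime0 (can_eq (@L6primeK m n)). Qed.

End L6Tests.

Lemma L6atom_down m n (s : 'I_n) : q6down m [set inl s].
Proof. by apply/q6downP => x y; rewrite inE => /eqP->; rewrite q6le_inl inE. Qed.

Definition L6atom m n (s : 'I_n) : L6car m n := exist (fun X => q6down m X) _ (L6atom_down m s).

Definition L6atomb m n (X : L6car m n) : bool :=
  [&& X != L6zero m n, L6star (L6prime X) == L6zero m n
    & L6star (L6prime (L6star X)) != L6zero m n].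

Lemma in_L6atom m n (s : 'I_n) z : (z \in sval (L6atom m s)) = (z == inl s).
Proof. exact: in_set1. Qed.

Lemma L6atom_inj m n : injective (@L6atom m n).
Proof.
move=> s t /(congr1 (fun Y : L6car m n => inl s \in sval Y)).
by rewrite !in_L6atom eqxx => /esym/eqP[].
Qed.

Lemma L6atom_neq0 m n (s : 'I_n) : L6atom m s != L6zero m n.
Proof.
apply/eqP => /(congr1 (fun Y : L6car m n => inl s \in sval Y)).
by rewrite in_L6atom in_L6zero eqxx.
Qed.

Lemma L6atomP m n (X : L6car m n) : 1 < n ->
  reflect (exists2 s : 'I_n, s < m & X = L6atom m s) (L6atomb X).
Proof.
move=> n_gt1; rewrite /L6atomb !L6star_eq0 //.
have notin_r (Y : L6car m n) :
    [forall s : 'I_n, inl s \in sval (L6prime Y)] = [forall s : 'I_n, inr s \notin sval Y].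
  by apply: eq_forallb => s; rewrite inl_L6prime.
rewrite !notin_r; apply: (iffP and3P) => [[X0 /forallP Xr /forallPn[s]]|[s sm ->]].
  rewrite negbK inr_L6star => /andP[_ /forallP Xs].
  have [z Xz] : exists z, z \in sval X.
    apply/existsP; apply: contraNT X0 => /existsPn X0; apply/eqP/val_inj/setP => z.
    by rewrite in_L6zero; apply/negbTE.
  case: z Xz => [t|t] Xt; last by have := Xr t; rewrite Xt.
  have /andP[/eqP ts tm] := implyP (Xs t) Xt; subst t.
  exists s => //; apply/val_inj/setP => -[t|t]; rewrite in_L6atom.
    by apply/idP/eqP => [/(implyP (Xs t))/andP[/eqP-> _]|[->]].
  by apply/negbTE.
split.
- exact: L6atom_neq0.
- by apply/forallP => t; rewrite in_L6atom.
- apply/forallPn; exists s; rewrite negbK inr_L6star in_L6atom; apply/andP; split => //.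
  by apply/forallP => t; rewrite in_L6atom; apply/implyP => /eqP[->]; rewrite eqxx.
Qed.

Definition tD (t : term) : term := tStar (tPrime (tStar (tPrime t))).
Definition tZ (t : term) : term := tD (tD (tPrime t)).
Definition tNZ (t : term) : term := tStar (tZ t).
Definition tAtom (t : term) : term :=
  tMeet (tNZ t) (tMeet (tZ (tStar (tPrime t))) (tNZ (tStar (tPrime (tStar t))))).
Definition tBigMeet (g : nat -> term) (l : seq nat) : term :=
  foldr (fun i t => tMeet (g i) t) tOne l.
Definition tBigJoin (g : nat -> term) (l : seq nat) : term :=
  foldr (fun i t => tJoin (g i) t) tZero l.

Definition tAtoms (k : nat) : term := tBigMeet (fun i => tAtom (tVar i)) (iota 0 k).
Definition tDisjoint (k : nat) : term :=
  tBigMeet (fun i => tBigMeet (fun j =>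
    if i == j then tOne else tZ (tMeet (tVar i) (tVar j))) (iota 0 k)) (iota 0 k).
Definition tDense (k : nat) : term := tZ (tStar (tBigJoin tVar (iota 0 k))).
Definition tFrame (k : nat) : term := tMeet (tMeet (tAtoms k) (tDisjoint k)) (tDense k).

Definition no_frame (k : nat) : term * term := (tFrame k, tZero).

Definition L6bigjoin m n (v : nat -> L6car m n) (l : seq nat) : L6car m n :=
  foldr (fun i Y => L6join (v i) Y) (L6zero m n) l.

Lemma in_L6bigjoin m n (v : nat -> L6car m n) l z :
  (z \in sval (L6bigjoin v l)) = has (fun i => z \in sval (v i)) l.
Proof. by elim: l => [|i l IHl] /=; rewrite ?in_L6zero // in_L6join IHl. Qed.

Definition L6frame m n (v : nat -> L6car m n) (k : nat) : bool :=
  let I := iota 0 k in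
  [&& all (fun i => L6atomb (v i)) I,
      all (fun i => all (fun j => (i == j) || (L6meet (v i) (v j) == L6zero m n)) I) I
    & L6star (L6bigjoin v I) == L6zero m n].

Section L6Terms.
Variables m n : nat.
Hypothesis n_gt2 : 2 < n.
Variable v : nat -> L6 m n.
Local Notation L0 := (L6zero m n).

Lemma teval_tZ t : teval v (tZ t) = L6bool m n (teval v t == L0).
Proof. exact: L6dd_primeE. Qed.

Lemma teval_tNZ t : teval v (tNZ t) = L6bool m n (teval v t != L0).
Proof. by rewrite -[LHS]/(L6star (teval v (tZ t))) teval_tZ L6star_bool. Qed.

Lemma teval_tAtom t : teval v (tAtom t) = L6bool m n (L6atomb (teval v t)).
Proof.
rewrite -[LHS]/(L6meet (teval v (tNZ t)) (L6meet (teval v (tZ (tStar (tPrime t))))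
                                               (teval v (tNZ (tStar (tPrime (tStar t))))))).
by rewrite !teval_tNZ teval_tZ !L6meet_bool.
Qed.

Lemma teval_tBigMeet g (b : pred nat) l : (forall i, i \in l -> teval v (g i) = L6bool m n (b i)) ->
  teval v (tBigMeet g l) = L6bool m n (all b l).
Proof.
elim: l => [|i l IHl] //= gb.

by rewrite gb ?mem_head // IHl ?L6meet_bool // => j lj; rewrite gb // in_cons lj orbT.
Qed.

Lemma teval_tBigJoin g l : teval v (tBigJoin g l) = L6bigjoin (fun i => teval v (g i)) l.
Proof. by elim: l => //= i l ->. Qed.

Lemma teval_tFrame k : teval v (tFrame k) = L6bool m n (L6frame v k).
Proof.
have atoms : teval v (tAtoms k) = L6bool m n (all (fun i => L6atomb (v i)) (iota 0 k)).
  by apply: teval_tBigMeet => i _; apply: teval_tAtom.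
have disjoint : teval v (tDisjoint k) = L6bool m n
    (all (fun i => all (fun j => (i == j) || (L6meet (v i) (v j) == L0)) (iota 0 k)) (iota 0 k)).
  apply: teval_tBigMeet => i _; apply: teval_tBigMeet => j _.
  by case: eqP => _; last exact: teval_tZ.
have dense : teval v (tDense k) = L6bool m n (L6star (L6bigjoin v (iota 0 k)) == L0).
  by rewrite teval_tZ -[teval v (tStar _)]/(L6star (teval v (tBigJoin tVar _))) teval_tBigJoin.
rewrite -[LHS]/(L6meet (L6meet (teval v (tAtoms k)) (teval v (tDisjoint k))) (teval v (tDense k))).
by rewrite atoms disjoint dense !L6meet_bool -andbA.
Qed.
End L6Terms.

Lemma L6frame_size m n (v : nat -> L6car m n) k : 1 < n -> L6frame v k -> k = n /\ n <= m.
Proof.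
move=> n_gt1 /and3P[/allP atoms /allP disjoint].
rewrite L6star_eq0 // => /forallP dense.
have n_gt0 : 0 < n by lia.
pose pt i := odflt (Ordinal n_gt0) [pick s | v i == L6atom m s].
have ptP i : i \in iota 0 k -> pt i < m /\ v i = L6atom m (pt i).
  move=> /atoms /(L6atomP _ n_gt1)[s sm vi].
  rewrite /pt; case: pickP => [t /eqP|/(_ s)]; last by rewrite vi eqxx.
  by rewrite vi => /L6atom_inj <-.
have pt_inj : {in iota 0 k &, injective pt}.
  move=> i j Ii Ij ptij; apply/eqP; apply: contraT => ij.
  have /allP/(_ j Ij) := disjoint i Ii.
  by rewrite (negPf ij) (ptP i Ii).2 (ptP j Ij).2 ptij L6meetxx (negPf (L6atom_neq0 _ _)).
have pt_onto s : s \in map pt (iota 0 k).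
  have := dense s; rewrite in_L6bigjoin => /hasP[i Ii].
  rewrite (ptP i Ii).2 in_L6atom => /eqP[->].
  exact: map_f.
have k_n : k = n.
  rewrite -(size_iota 0 k) -(size_map pt); apply: size_uniq_ord => //.
  by rewrite (map_inj_in_uniq pt_inj) iota_uniq.
split => //; have n_pred : n.-1 < n by lia.
have /mapP[i Ii /(congr1 val)/= pred_n] := pt_onto (Ordinal n_pred).
by have := (ptP i Ii).1; lia.
Qed.

Definition L6atom_nat m n (i : nat) : L6car m n :=
  if insub i is Some s then L6atom m s else L6zero m n.

Lemma L6frame_atom_nat m n : 1 < n -> n <= m -> L6frame (L6atom_nat m n) n.
Proof.
move=> n_gt1 n_le_m.
have atomE i (i_lt_n : i < n) : L6atom_nat m n i = L6atom m (Ordinal i_lt_n).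
  by rewrite /L6atom_nat insubT.
have lt_n i : i \in iota 0 n -> i < n by rewrite mem_iota.
apply/and3P; split.
- apply/allP => i /lt_n i_lt_n; rewrite atomE; apply/L6atomP => //.
  by exists (Ordinal i_lt_n) => //=; lia.
- apply/allP => i /lt_n i_lt_n; apply/allP => j /lt_n j_lt_n; case: eqVneq => //= ij.
  rewrite !atomE; apply/eqP/val_inj/setP => z; rewrite in_L6meet !in_L6atom in_L6zero.
  by case: eqP => // -> /=; apply/negbTE/eqP => -[ij']; rewrite ij' eqxx in ij.
- rewrite L6star_eq0 //; apply/forallP => s; rewrite in_L6bigjoin; apply/hasP.
  exists (val s); first by rewrite mem_iota /=.
  by rewrite (atomE _ (ltn_ord s)) in_L6atom; apply/eqP; congr inl; apply: val_inj.
Qed.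

Lemma L6_holds_no_frame n k : 2 < n -> holds (L6 n n) (no_frame k) <-> k != n.
Proof.
move=> n_gt2; split => [no_k|k_n v].
  apply/eqP => k_eq; have := no_k (L6atom_nat n n).
  change (teval (L6atom_nat n n : nat -> L6 n n) (tFrame k) <> L6zero n n).
  rewrite teval_tFrame // k_eq L6frame_atom_nat //; last by lia.
  by apply/eqP; rewrite eq_sym L6zero_neq_one //; lia.
change (teval v (tFrame k) = L6zero n n); rewrite teval_tFrame //.
case frame_k: L6frame => //; have [] := L6frame_size (ltnW n_gt2) frame_k.
by move/eqP: k_n.
Qed.

Lemma pm_hom_teval (A B : pmAlg) (f : A -> B) (v : nat -> A) (t : term) :
  pm_hom f -> f (teval v t) = teval (f \o v) t.
Proof.
case=> fM [fJ [fS [fP [f0 f1]]]].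
by elim: t => //= [s IHs u IHu|s IHs u IHu|s IHs|s IHs]; rewrite ?fM ?fJ ?fS ?fP ?IHs ?IHu.
Qed.

Lemma L6_embeds_L6 p m n : 2 < p -> 2 < n -> m <= n ->
  pm_embeds (L6 p p) (L6 m n) <-> p = m /\ m = n.
Proof.
move=> p_gt2 n_gt2 m_le_n; split => [[f [_ f_hom]]|[<- <-]]; last first.
  by exists id; do !split.
have frame_p : teval (L6atom_nat p p : nat -> L6 p p) (tFrame p) = L6one p p.
  by rewrite teval_tFrame // L6frame_atom_nat //; lia.
have [_ [_ [_ [_ [_ f1]]]]] := f_hom.
have := pm_hom_teval (L6atom_nat p p : nat -> L6 p p) (tFrame p) f_hom.
rewrite frame_p f1 teval_tFrame // => /esym/eqP.
rewrite L6bool_eq1; last by lia.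
by case/(L6frame_size (ltnW n_gt2)); lia.
Qed.

Definition theory (K : pmAlg -> Prop) (e : term * term) : Prop := forall A, K A -> holds A e.

Lemma subvariety_M1_theory K : is_subvariety_M1 K ->
  forall A, K A <-> inM1 A /\ forall e, theory K e -> holds A e.
Proof.
move=> [Sigma KE] A; split => [KA|[M1A thA]].
  by split=> [|e]; [exact: (proj1 ((KE A).1 KA)) | apply].
by apply/KE; split => // e Se; apply: thA => B /KE[_]; apply.
Qed.

Lemma subvariety_M1_eq K1 K2 : is_subvariety_M1 K1 -> is_subvariety_M1 K2 ->
  (forall e, theory K1 e <-> theory K2 e) -> forall A, K1 A <-> K2 A.
Proof.
move=> K1var K2var thE A; rewrite (subvariety_M1_theory K1var) (subvariety_M1_theory K2var).
by split=> -[M1A thA]; split=> // e /thE; apply: thA.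
Qed.

(* Index j stands for k = j + 3, the range of k where L_6(k,k) can tell the
   identities no_frame k apart. *)
Definition no_frame_variety (s : nat -> bool) (A : pmAlg) : Prop :=
  inM1 A /\ forall j, s j = false -> holds A (no_frame j.+3).

Lemma no_frame_variety_subvariety s : is_subvariety_M1 (no_frame_variety s).
Proof.
exists (fun e => exists2 j, s j = false & e = no_frame j.+3) => A.
split=> -[M1A H]; split=> //.
  by move=> e [j sj ->]; apply: H.
by move=> j sj; apply: H; exists j.
Qed.

Lemma no_frame_variety_L6 s k : no_frame_variety s (L6 k.+3 k.+3) <-> s k.
Proof.
split=> [[_ no_frames]|sk].
  by apply: contraT => /negbTE/no_frames/L6_holds_no_frame; rewrite eqxx => /(_ isT).
split=> [|j sj]; first exact: L6_inM1.
by apply/L6_holds_no_frame => //; apply: contraTneq sk => -[jk]; rewrite -jk sj.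
Qed.

Fixpoint tree_of_term (t : term) : GenTree.tree nat :=
  match t with
  | tVar i => GenTree.Leaf i
  | tMeet a b => GenTree.Node 0 [:: tree_of_term a; tree_of_term b]
  | tJoin a b => GenTree.Node 1 [:: tree_of_term a; tree_of_term b]
  | tStar a => GenTree.Node 2 [:: tree_of_term a]
  | tPrime a => GenTree.Node 3 [:: tree_of_term a]
  | tZero => GenTree.Node 4 [::]
  | tOne => GenTree.Node 5 [::]
  end.

Fixpoint term_of_tree (x : GenTree.tree nat) : option term :=
  match x with
  | GenTree.Leaf i => Some (tVar i)
  | GenTree.Node 0 [:: a; b] =>
      if term_of_tree a is Some a' then omap (tMeet a') (term_of_tree b) else None
  | GenTree.Node 1 [:: a; b] =>
      if term_of_tree a is Some a' then omap (tJoin a') (term_of_tree b) else None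
  | GenTree.Node 2 [:: a] => omap tStar (term_of_tree a)
  | GenTree.Node 3 [:: a] => omap tPrime (term_of_tree a)
  | GenTree.Node 4 [::] => Some tZero
  | GenTree.Node 5 [::] => Some tOne
  | _ => None
  end.

Lemma tree_of_termK : pcancel tree_of_term term_of_tree.
Proof. by elim=> //= [? -> ? ->|? -> ? ->|? ->|? ->]. Qed.

HB.instance Definition _ := Countable.copy term (pcan_type tree_of_termK).

Definition theory_code (K : pmAlg -> Prop) (k : nat) : bool :=
  if unpickle k is Some e then
    if excluded_middle_informative (theory K e) then true else false
  else false.

Lemma theory_code_inj K1 K2 : theory_code K1 =1 theory_code K2 ->
  forall e, theory K1 e <-> theory K2 e.
Proof.
move=> codeE e; have := codeE (pickle e); rewrite /theory_code pickleK.
by do 2!case: excluded_middle_informative.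
Qed.

Theorem corollary5p6 :
  (forall p n m : nat, 3 <= p -> 3 <= n -> m <= n ->
     (pm_embeds (L6 p p) (L6 m n) <-> (p = m /\ m = n)))
  /\
  ((exists f : (nat -> bool) -> (pmAlg -> Prop),
      (forall s, is_subvariety_M1 (f s)) /\
      (forall s t, (forall A, f s A <-> f t A) -> forall k, s k = t k))
   /\
   (exists g : (pmAlg -> Prop) -> (nat -> bool),
      forall K1 K2, is_subvariety_M1 K1 -> is_subvariety_M1 K2 ->
        (forall k, g K1 k = g K2 k) -> forall A, K1 A <-> K2 A)).
Proof.
split; first by move=> p n m; apply: L6_embeds_L6.
split.
  exists no_frame_variety; split; first exact: no_frame_variety_subvariety.
  by move=> s t st k; apply/idP/idP; rewrite -!no_frame_variety_L6 => /st.
exists theory_code => K1 K2 K1var K2var codeE.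
exact: subvariety_M1_eq (theory_code_inj codeE).
Qed.
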